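(* The map $\pi^\infty:J^\infty_0(\mathbb C^p,V)/G\to J^\infty_0(\mathbb C^p,Z)$ is injective: if $F_1,F_2:\mathbb C[V]\to\mathbb C[[X_1,\dots,X_p]]$ are $\mathbb C$-algebra homomorphisms with $F_1|_{\mathbb C[V]^G}=F_2|_{\mathbb C[V]^G}$, then there is $g\in G$ with $F_2=F_1\circ g^*$, where $g^*\varphi=\varphi\circ g$.
   Context: $V$ is a finite-dimensional complex vector space, $G\subset GL(V)$ a finite group, $Z=V/G$ the orbit space with $\mathbb C[Z]=\mathbb C[V]^G$ and quotient map $\pi$. $J^\infty_0(\mathbb C^p,X)$ denotes the set of $\mathbb C$-algebra homomorphisms $\mathbb C[X]\to\mathbb C[[X_1,\dots,X_p]]$ (formal morphisms); $G$ acts on $J^\infty_0(\mathbb C^p,V)$ through its action on $\mathbb C[V]$, and $\pi^\infty$ is induced by restriction to $\mathbb C[V]^G$. *)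

From HB Require Import structures.
From mathcomp Require Import all_boot all_order all_algebra all_fingroup.
From mathcomp Require Import mxrepresentation.
From mathcomp Require Import mpoly.
From mathcomp Require Import complex.
From mathcomp Require Import reals.

Set Implicit Arguments.
Unset Strict Implicit.
Unset Printing Implicit Defensive.

Import GRing.Theory.
Local Open Scope ring_scope.

Section PowerSeries.
Variables (K : comNzRingType) (p : nat).

Definition pseries := 'X_{1..p} -> K.

Definition ps_add (f g : pseries) : pseries := fun m => f m + g m.

(* total degree <= mdeg m, so a ranges over the finite type of monomials of  *)
(* degree < (mdeg m).+1.                                                      *)
Definition ps_mul (f g : pseries) : pseries := fun m =>
  \sum_(a : 'X_{1..p < (mdeg m).+1} | (a <= m)%MM) f a * g (m - a)%MM.

Definition ps_one : pseries := fun m => (m == 0%MM)%:R.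

Definition ps_scale (c : K) (f : pseries) : pseries := fun m => c * f m.

End PowerSeries.

Definition is_alg_hom (K : comNzRingType) (n p : nat)
    (F : {mpoly K[n]} -> pseries K p) : Prop :=
  [/\ forall P Q, F (P + Q) = ps_add (F P) (F Q),
      forall P Q, F (P * Q) = ps_mul (F P) (F Q),
      F 1 = @ps_one K p &
      forall (c : K) P, F (c *: P) = ps_scale c (F P)].

(* For a linear map A of V = K^n (acting on column vectors), the pullback     *)
(* A^* phi = phi o A on polynomial functions: x_i |-> sum_j A i j x_j.        *)
Definition pullback (K : comNzRingType) (n : nat) (A : 'M[K]_n)
    (P : {mpoly K[n]}) : {mpoly K[n]} :=
  P \mPo [tuple \sum_(j < n) A i j *: 'X_j | i < n].

Definition invariant_poly (K : fieldType) (gT : finGroupType) (G : {group gT})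
    (n : nat) (rG : mx_representation K G n) (P : {mpoly K[n]}) : Prop :=
  forall g, g \in G -> pullback (rG g) P = P.

From HB Require Import structures.
From mathcomp Require Import all_boot all_order all_algebra all_fingroup.
From mathcomp Require Import mxrepresentation.
From mathcomp Require Import mpoly.
From mathcomp Require Import complex.
From mathcomp Require Import reals.
From Stdlib Require Import Classical FunctionalExtensionality.

(* Truncating a formal morphism F below total degree D yields the polynomial
   algebra morphism x_i |-> (F x_i truncated), which agrees with F below degree D.
   For a polynomial l, the orbit polynomial Q_l(T) = prod_{g in G} (T - g^* l) has
   invariant coefficients and the root l; comparing the two truncated morphisms on
   Q_l(l) = 0 shows that prod_g (F2 l - F1 (g^* l)) vanishes to every order, and
   since power series form a domain (compare lowest monomials) F2 l = F1 (g^* l)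
   for some g depending on l.  Applying this to the forms sum_i t^i x_i, with t a
   natural number avoiding the finitely many roots of the nonzero polynomials in t
   recording the failures of each g on the coordinates, gives one g that works on
   every coordinate x_i, hence on all of K[V]. *)

Set Implicit Arguments.
Unset Strict Implicit.
Unset Printing Implicit Defensive.

Import Order.TTheory GRing.Theory.
Local Open Scope ring_scope.

Section Truncation.
Variables (K : comNzRingType) (p : nat).
Implicit Types (f g : pseries K p) (u v w z : {mpoly K[p]}).

Definition trunc (D : nat) f : {mpoly K[p]} :=
  \sum_(m : 'X_{1..p < D}) f m *: 'X_[m].

Lemma mcoeff_trunc D f m :
  (trunc D f)@_m = if (mdeg m < D)%N then f m else 0.
Proof.
case: ltnP => hm; first exact: mcoeff_mpoly.
rewrite /trunc raddf_sum big1 // => m' _; rewrite /= mcoeffZ mcoeffX.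
by case: eqP => [em|]; [move: (bmdeg m'); rewrite em ltnNge hm | rewrite mulr0].
Qed.

Lemma trunc_sub D f g : trunc D (fun m => f m - g m) = trunc D f - trunc D g.
Proof. by rewrite -sumrB; apply: eq_bigr => m _; rewrite scalerBl. Qed.

Definition eq_below D u v := forall m, (mdeg m < D)%N -> u@_m = v@_m.

Lemma eq_below_sym D u v : eq_below D u v -> eq_below D v u.
Proof. by move=> h m hm; rewrite h. Qed.

Lemma eq_below_trans D u v w :
  eq_below D u v -> eq_below D v w -> eq_below D u w.
Proof. by move=> h1 h2 m hm; rewrite h1 ?h2. Qed.

Lemma eq_belowD D u v w z :
  eq_below D u v -> eq_below D w z -> eq_below D (u + w) (v + z).
Proof. by move=> h1 h2 m hm; rewrite !mcoeffD h1 ?h2. Qed.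

Lemma eq_belowB D u v w z :
  eq_below D u v -> eq_below D w z -> eq_below D (u - w) (v - z).
Proof. by move=> h1 h2 m hm; rewrite !mcoeffB h1 ?h2. Qed.

Lemma eq_belowM D u v w z :
  eq_below D u v -> eq_below D w z -> eq_below D (u * w) (v * z).
Proof.
move=> huv hwz m hm; rewrite !mcoeffM; apply: eq_bigr => k /eqP hk.
have le1 := leq_addr (mdeg k.2) (mdeg k.1).
have le2 := leq_addl (mdeg k.1) (mdeg k.2).
rewrite -mdegD -hk in le1 le2.
by rewrite huv ?hwz //; apply: leq_ltn_trans hm.
Qed.

Lemma eq_below_sum D (I : Type) (r : seq I) (P : pred I) (F G : I -> {mpoly K[p]}) :
  (forall i, P i -> eq_below D (F i) (G i)) ->
  eq_below D (\sum_(i <- r | P i) F i) (\sum_(i <- r | P i) G i).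
Proof. by move=> h; apply: (big_ind2 (eq_below D)) => //; apply: eq_belowD. Qed.

Lemma eq_below_prod D (I : Type) (r : seq I) (P : pred I) (F G : I -> {mpoly K[p]}) :
  (forall i, P i -> eq_below D (F i) (G i)) ->
  eq_below D (\prod_(i <- r | P i) F i) (\prod_(i <- r | P i) G i).
Proof. by move=> h; apply: (big_ind2 (eq_below D)) => //; apply: eq_belowM. Qed.

Lemma eq_below_horner D (P Q : {poly {mpoly K[p]}}) x :
  (forall k, eq_below D P`_k Q`_k) -> eq_below D P.[x] Q.[x].
Proof.
move=> hPQ.
rewrite (horner_coef_wide _ (leq_maxl (size P) (size Q))).
rewrite (horner_coef_wide _ (leq_maxr (size P) (size Q))).
by apply: eq_below_sum => k _; apply: eq_belowM.
Qed.

Lemma mcoeffM_sub u v m :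
  (u * v)@_m = \sum_(a : 'X_{1..p < (mdeg m).+1} | (a <= m)%MM) u@_a * v@_(m - a).
Proof.
rewrite mcoeffM -(pair_big_dep xpredT
  (fun a b : 'X_{1..p < (mdeg m).+1} => m == (a + b)%MM) (fun a b => u@_a * v@_b)) /=.
rewrite [RHS]big_mkcond; apply: eq_bigr => a _; case: ifP => ham.
  have hb : (mdeg (m - a)%MM < (mdeg m).+1)%N by rewrite ltnS mdegB.
  rewrite (big_pred1 (BMultinom hb)) // => b /=; apply/eqP/eqP => [e|->].
    apply: val_inj; have := congr1 (fun x => (x - bmnm a)%MM) e.
    by rewrite /= [(bmnm a + _)%MM]addmC addmK => ->.
  by rewrite /= addmC submK.
rewrite big1 // => b /eqP e.
by have := lem_addr (bmnm a) (bmnm b); rewrite -e ham.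
Qed.

Lemma trunc_mul D f g : eq_below D (trunc D (ps_mul f g)) (trunc D f * trunc D g).
Proof.
move=> m hm; rewrite mcoeff_trunc hm mcoeffM_sub; apply: eq_bigr => a ham.
have lea := leq_addl (mdeg (m - a)%MM) (mdeg a).
rewrite -mdegD submK // in lea.
by rewrite !mcoeff_trunc (leq_ltn_trans lea hm) (leq_ltn_trans (mdegB _ _) hm).
Qed.

End Truncation.

Lemma mpoly_algind (K : comNzRingType) (n : nat) (S : {mpoly K[n]} -> Prop) :
  S 0 -> (forall u v, S u -> S v -> S (u + v)) ->
  (forall c u, S u -> S (c *: u)) -> S 1 ->
  (forall u v, S u -> S v -> S (u * v)) -> (forall i, S 'X_i) ->
  forall P, S P.
Proof.
move=> S0 SD SZ S1 SM SX; elim/mpolyind => // c m P _ _ SP.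
apply: SD => //; apply: SZ; rewrite mpolyXE_id.
apply: (big_ind S) => // i _; elim: (m i) => [|k IH]; first by rewrite expr0.
by rewrite exprS; apply: SM.
Qed.

Section AlgHom.
Variables (K : comNzRingType) (n p : nat) (F : {mpoly K[n]} -> pseries K p).
Hypothesis hF : is_alg_hom F.

Lemma alg_homD P Q m : F (P + Q) m = F P m + F Q m.
Proof. by case: hF => -> _ _ _. Qed.

Lemma alg_homZ c P m : F (c *: P) m = c * F P m.
Proof. by case: hF => _ _ _ ->. Qed.

Lemma alg_hom0 m : F 0 m = 0.
Proof. by rewrite -(scale0r (0 : {mpoly K[n]})) alg_homZ mul0r. Qed.

Lemma alg_hom_sum (I : Type) (r : seq I) (P : pred I) (Q : I -> {mpoly K[n]}) m :
  F (\sum_(i <- r | P i) Q i) m = \sum_(i <- r | P i) F (Q i) m.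
Proof.
apply: (big_rec2 (fun x y => F y m = x)); first by rewrite alg_hom0.
by move=> i a b _ <-; rewrite alg_homD.
Qed.

Lemma alg_hom_pullback (A : 'M[K]_n) : is_alg_hom (F \o pullback A).
Proof.
case: hF => FD FM F1 FZ; split=> [P Q|P Q||c P] /=.
- by rewrite /pullback raddfD FD.
- by rewrite /pullback rmorphM FM.
- by rewrite /pullback rmorph1 F1.
- by rewrite /pullback linearZ FZ.
Qed.

Definition trunc_images D : n.-tuple {mpoly K[p]} := [tuple trunc D (F 'X_i) | i < n].

Lemma trunc_alg_hom D P : eq_below D (trunc D (F P)) (P \mPo trunc_images D).
Proof.
elim/mpoly_algind: P.
- by move=> m hm; rewrite mcoeff_trunc hm alg_hom0 raddf0 mcoeff0.
- move=> u v hu hv m hm; rewrite raddfD mcoeffD -hu // -hv //.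
  by rewrite !mcoeff_trunc hm alg_homD.
- move=> c u hu m hm; rewrite linearZ mcoeffZ -hu //.
  by rewrite !mcoeff_trunc hm alg_homZ.
- by move=> m hm; rewrite rmorph1 mcoeff1 mcoeff_trunc hm; case: hF => _ _ -> _.
- move=> u v hu hv; rewrite rmorphM; case: hF => _ -> _ _.
  exact: eq_below_trans (trunc_mul (F u) (F v)) (eq_belowM hu hv).
- by move=> i m hm; rewrite comp_mpolyXU -tnth_nth tnth_mktuple.
Qed.

End AlgHom.

Lemma alg_hom_eq (K : comNzRingType) (n p : nat) (F F' : {mpoly K[n]} -> pseries K p) :
  is_alg_hom F -> is_alg_hom F' -> (forall i, F 'X_i = F' 'X_i) -> F =1 F'.
Proof.
move=> hF hF'; have [FD FM F1 FZ] := hF; have [F'D F'M F'1 F'Z] := hF' => hX.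
elim/mpoly_algind => [|u v hu hv|c u hu||u v hu hv|//].
- by apply: functional_extensionality => m; rewrite (alg_hom0 hF) (alg_hom0 hF').
- by rewrite FD F'D hu hv.
- by rewrite FZ F'Z hu.
- by rewrite F1 F'1.
- by rewrite FM F'M hu hv.
Qed.

Lemma ltm_exists_min (p : nat) (P : 'X_{1..p} -> Prop) m0 :
  P m0 -> exists2 mu, P mu & forall m, (m < mu)%O -> ~ P m.
Proof.
move: m0; apply: ltmwf => m0 IH P0.
case: (classic (exists2 m, (m < m0)%O & P m)) => [[m lt_m Pm]|none].
  exact: IH lt_m Pm.
by exists m0 => // m lt_m Pm; apply: none; exists m.
Qed.

Section LowestTerms.
Variables (K : idomainType) (p : nat).

Definition vanish_below (u : {mpoly K[p]}) (a : 'X_{1..p}) :=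
  forall m, (m < a)%O -> u@_m = 0.

Lemma vanish_belowM u w a b : vanish_below u a -> vanish_below w b ->
  vanish_below (u * w) (a + b)%MM /\ (u * w)@_(a + b)%MM = u@_a * w@_b.
Proof.
move=> hu hw; split.
  move=> c hc; rewrite mcoeffM big1 // => k /eqP hk.
  case: (ltP (bmnm k.1) a) => [h1|h1]; first by rewrite hu // mul0r.
  case: (ltP (bmnm k.2) b) => [h2|h2]; first by rewrite hw // mulr0.
  by have := lt_le_trans hc (lem_add h1 h2); rewrite -hk ltxx.
have ha : (mdeg a < (mdeg (a + b)%MM).+1)%N by rewrite ltnS mdegD leq_addr.
have hb : (mdeg b < (mdeg (a + b)%MM).+1)%N by rewrite ltnS mdegD leq_addl.
rewrite mcoeffM (bigD1 (BMultinom ha, BMultinom hb)) //= big1 ?addr0 // => k.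
case/andP=> /eqP hk hne.
case: (ltP (bmnm k.1) a) => [h1|h1]; first by rewrite hu // mul0r.
case: (ltP (bmnm k.2) b) => [h2|h2]; first by rewrite hw // mulr0.
move: h1; rewrite le_eqVlt => /orP[/eqP e1|l1]; last first.
  by have := ltmc_le_add l1 h2; rewrite -hk ltxx.
move: h2; rewrite le_eqVlt => /orP[/eqP e2|l2]; last first.
  by have := lemc_lt_add (lexx (bmnm k.1)) l2; rewrite -hk -e1 ltxx.
by move/eqP: hne; case; case: k {hk} e1 e2 => k1 k2 /= e1 e2; congr pair; apply: val_inj.
Qed.

Lemma vanish_below_prod (I : Type) (r : seq I) (P : pred I)
    (U : I -> {mpoly K[p]}) (A : I -> 'X_{1..p}) :
  (forall i, P i -> vanish_below (U i) (A i)) ->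
  vanish_below (\prod_(i <- r | P i) U i) (\sum_(i <- r | P i) A i)%MM /\
  (\prod_(i <- r | P i) U i)@_(\sum_(i <- r | P i) A i)%MM =
    \prod_(i <- r | P i) (U i)@_(A i).
Proof.
move=> hUA; elim: r => [|i r [IH1 IH2]].
  by rewrite !big_nil mcoeff1 eqxx; split=> // m; rewrite ltNge le0x.
rewrite !big_cons; case: ifP => Pi //.
have [low coef] := vanish_belowM (hUA i Pi) IH1.
by split=> //; rewrite coef IH2.
Qed.

(* Formal power series form a domain: compare lowest monomials. *)
Lemma pseries_prodf_eq0 (I : finType) (A : {set I}) (f : I -> pseries K p) :
  (forall D, eq_below D (\prod_(i in A) trunc D (f i)) 0) ->
  exists2 i, i \in A & forall m, f i m = 0.
Proof.
move=> prod0; apply: NNPP => none.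
have lowest i : exists mu, i \in A -> f i mu != 0 /\ forall m, (m < mu)%O -> f i m = 0.
  case: (boolP (i \in A)) => iA; last by exists 0%MM.
  have [m0 fm0] : exists m0, f i m0 != 0.
    apply: NNPP => all0; apply: none; exists i => // m.
    by case: (eqVneq (f i m) 0) => // fm; case: all0; exists m.
  have [mu fmu min_mu] := ltm_exists_min (P := fun m => f i m != 0) fm0.
  by exists mu => _; split=> // m /min_mu; case: (eqVneq (f i m) 0).
have [mu hmu] := fin_all_exists lowest.
pose M := (\sum_(i in A) mu i)%MM; pose D := (mdeg M).+1.
have deg_mu i : i \in A -> (mdeg (mu i) < D)%N.
  by move=> iA; rewrite ltnS /M (bigD1 i) //= mdegD leq_addr.
have low i : i \in A -> vanish_below (trunc D (f i)) (mu i).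
  by move=> iA m lt_m; rewrite mcoeff_trunc (hmu i iA).2 // if_same.
have [_ coefM] := vanish_below_prod (index_enum I) low.
have /negP[] : (\prod_(i in A) trunc D (f i))@_M != 0.
  rewrite coefM; apply/prodf_neq0 => i iA.
  by rewrite mcoeff_trunc deg_mu //; case: (hmu i iA).
by rewrite prod0 ?mcoeff0.
Qed.

End LowestTerms.

Lemma comp_mpolyA (K : comNzRingType) (n k l : nat) (P : {mpoly K[n]})
    (lq : n.-tuple {mpoly K[k]}) (lr : k.-tuple {mpoly K[l]}) :
  (P \mPo lq) \mPo lr = P \mPo [tuple tnth lq i \mPo lr | i < n].
Proof.
elim/mpoly_algind: P => [|u v hu hv|c u hu||u v hu hv|i].
- by rewrite !comp_mpoly0.
- by rewrite !comp_mpolyD hu hv.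
- by rewrite !comp_mpolyZ hu.
- by rewrite !comp_mpoly1.
- by rewrite !rmorphM /= hu hv.
- by rewrite !comp_mpolyXU -!tnth_nth tnth_mktuple.
Qed.

Section Pullback.
Variables (K : comNzRingType) (n : nat).
Implicit Types (A B : 'M[K]_n) (P : {mpoly K[n]}).

Lemma pullbackX A i : pullback A 'X_i = \sum_(j < n) A i j *: 'X_j.
Proof. by rewrite /pullback comp_mpolyXU -tnth_nth tnth_mktuple. Qed.

Lemma pullback_comp A B P : pullback B (pullback A P) = pullback (A *m B) P.
Proof.
rewrite /pullback comp_mpolyA; congr comp_mpoly; apply: eq_mktuple => i.
rewrite tnth_mktuple raddf_sum /=.
under eq_bigr do rewrite linearZ /= -/(pullback B _) pullbackX scaler_sumr.
rewrite exchange_big /=; apply: eq_bigr => j _.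
by rewrite mxE scaler_suml; apply: eq_bigr => k _; rewrite scalerA.
Qed.

Lemma pullback1 P : pullback 1%:M P = P.
Proof.
rewrite /pullback -[RHS]comp_mpoly_id; congr comp_mpoly; apply: eq_mktuple => i.
rewrite (bigD1 i) //= mxE eqxx scale1r big1 ?addr0 // => j ji.
by rewrite mxE eq_sym (negbTE ji) scale0r.
Qed.

End Pullback.

Section OrbitWitness.
Variables (K : fieldType) (n p : nat) (gT : finGroupType) (G : {group gT}).
Variables (rG : mx_representation K G n) (F1 F2 : {mpoly K[n]} -> pseries K p).
Hypotheses (hF1 : is_alg_hom F1) (hF2 : is_alg_hom F2).
Hypothesis F1_F2_invariant : forall P, invariant_poly rG P -> F1 P = F2 P.

Definition orbit_poly (l : {mpoly K[n]}) : {poly {mpoly K[n]}} :=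
  \prod_(g in G) ('X - (pullback (rG g) l)%:P).

Lemma orbit_poly_coef_invariant l k : invariant_poly rG (orbit_poly l)`_k.
Proof.
move=> h hG.
have inv : map_poly (comp_mpoly [tuple \sum_(j < n) rG h i j *: 'X_j | i < n])
    (orbit_poly l) = orbit_poly l.
  rewrite /orbit_poly rmorph_prod [RHS](reindex_inj (mulIg h)) /=.
  apply: eq_big => [g|g gG]; first by rewrite groupMr.
  by rewrite map_polyXsubC (repr_mxM rG gG hG) -pullback_comp.
by rewrite -[in RHS]inv coef_map.
Qed.

Lemma orbit_poly_root l : (orbit_poly l).[l] = 0.
Proof.
rewrite horner_prod; apply/eqP; rewrite prodf_seq_eq0; apply/hasP; exists 1%g.
  exact: mem_index_enum.
by rewrite group1 repr_mx1 pullback1 hornerXsubC subrr eqxx.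
Qed.

Local Notation theta F D := (comp_mpoly (trunc_images F D)).

Lemma trunc_orbit_prod D l :
  eq_below D (\prod_(g in G) (theta F2 D l - theta F1 D (pullback (rG g) l))) 0.
Proof.
have -> : \prod_(g in G) (theta F2 D l - theta F1 D (pullback (rG g) l)) =
    (map_poly (theta F1 D) (orbit_poly l)).[theta F2 D l].
  rewrite /orbit_poly rmorph_prod horner_prod; apply: eq_bigr => g _.
  by rewrite /= map_polyXsubC hornerXsubC.
rewrite -(rmorph0 (theta F2 D)) -(orbit_poly_root l) -horner_map.
apply: eq_below_horner => k; rewrite !coef_map /=.
apply: eq_below_trans (eq_below_sym (trunc_alg_hom hF1 _)) _.
rewrite F1_F2_invariant; last exact: orbit_poly_coef_invariant.
exact: (trunc_alg_hom hF2 (D:=D) _).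
Qed.

Lemma orbit_witness l : exists2 g, g \in G & F2 l = F1 (pullback (rG g) l).
Proof.
pose diff g m := F2 l m - F1 (pullback (rG g) l) m.
have prod0 D : eq_below D (\prod_(g in G) trunc D (diff g)) 0.
  apply: (eq_below_trans _ (trunc_orbit_prod l)); apply: eq_below_prod => g _.
  by rewrite trunc_sub; apply: eq_belowB; apply: trunc_alg_hom.
have [g gG diff0] := pseries_prodf_eq0 prod0.
exists g => //; apply: functional_extensionality => m.
by apply/eqP; rewrite -subr_eq0 -[_ - _]/(diff g m) diff0.
Qed.

End OrbitWitness.

Lemma exists_nat_nonroot (K : numDomainType) (q : {poly K}) :
  q != 0 -> exists k : nat, q.[k%:R] != 0.
Proof.
move=> q_neq0; pose s := [seq k%:R : K | k <- iota 0 (size q)].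
have s_uniq : uniq s.
  by rewrite map_inj_uniq ?iota_uniq // => i j /eqP; rewrite Num.Theory.eqr_nat => /eqP.
have /allPn[_ /mapP[k _ ->] nroot] : ~~ all (root q) s.
  by apply/negP => /(max_poly_roots q_neq0) /(_ s_uniq); rewrite size_map size_iota ltnn.
by exists k.
Qed.

Section CoordinateWitness.
Variables (K : numFieldType) (n p : nat) (gT : finGroupType) (G : {group gT}).
Variables (rG : mx_representation K G n) (F1 F2 : {mpoly K[n]} -> pseries K p).
Hypotheses (hF1 : is_alg_hom F1) (hF2 : is_alg_hom F2).
Hypothesis F1_F2_invariant : forall P, invariant_poly rG P -> F1 P = F2 P.

Lemma coordinate_witness :
  exists2 g, g \in G & forall i, F2 'X_i = F1 (pullback (rG g) 'X_i).
Proof.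
apply: NNPP => none.
pose d g i m := F2 'X_i m - F1 (pullback (rG g) 'X_i) m.
have bad g : exists m, g \in G -> exists i, d g i m != 0.
  case: (boolP (g \in G)) => gG; last by exists 0%MM.
  apply: NNPP => all0; apply: none; exists g => // i.
  apply: functional_extensionality => m; apply/eqP; rewrite -subr_eq0.
  by case: (eqVneq (d g i m) 0) => // dm; case: all0; exists m => _; exists i.
have [m hm] := fin_all_exists bad.
pose P g : {poly K} := \sum_(i < n) d g i (m g) *: 'X^i.
have P_neq0 g : g \in G -> P g != 0.
  move=> gG; have [i di] := hm g gG; apply: contra_neq di => P0.
  have := congr1 (fun q : {poly K} => q`_i) P0.
  rewrite coef0 coef_sum (bigD1 i) //= coefZ coefXn eqxx mulr1 big1 ?addr0 // => j ji.
  rewrite coefZ coefXn; case: eqP => [/val_inj ij|]; last by rewrite mulr0.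
  by rewrite ij eqxx in ji.
have [k Pk] : exists k : nat, (\prod_(g in G) P g).[k%:R] != 0.
  by apply/exists_nat_nonroot/prodf_neq0.
pose t : K := k%:R; pose l := \sum_(i < n) t ^+ i *: 'X_i.
have [g gG eq_l] := orbit_witness hF1 hF2 F1_F2_invariant l.
have : (P g).[t] = 0.
  transitivity (F2 l (m g) - F1 (pullback (rG g) l) (m g)); last by rewrite eq_l subrr.
  rewrite horner_sum (alg_hom_sum hF2) /pullback raddf_sum (alg_hom_sum hF1) -sumrB.
  apply: eq_bigr => i _.
  by rewrite hornerZ hornerXn /= comp_mpolyZ (alg_homZ hF2) (alg_homZ hF1) -mulrBr mulrC.
by apply/eqP; move: Pk; rewrite horner_prod => /prodf_neq0/(_ g gG).
Qed.

End CoordinateWitness.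

Theorem corollary5p4 (R : realType) (n p : nat) (gT : finGroupType)
    (G : {group gT}) (rG : mx_representation R[i] G n)
    (F1 F2 : {mpoly R[i][n]} -> pseries R[i] p) :
  is_alg_hom F1 -> is_alg_hom F2 ->
  (forall P, invariant_poly rG P -> F1 P = F2 P) ->
  exists2 g, g \in G & forall P, F2 P = F1 (pullback (rG g) P).
Proof.
move=> hF1 hF2 F1_F2_invariant.
have [g gG onX] := coordinate_witness hF1 hF2 F1_F2_invariant.
by exists g => //; apply: alg_hom_eq hF2 (alg_hom_pullback hF1 (rG g)) onX.
Qed.
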